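(* Let $g\in\mathbb{Q}[x_1,\dots,x_n]$ be a monic polynomial, and let $g=\prod_{i=1}^m h_i$ be a factorization of $g$ over $\mathbb{Q}$ in which every $h_i\in\mathbb{Q}[x_1,\dots,x_n]$ is monic. Let $N>0$ be the least common multiple of the denominators of the coefficients of $g$. Then for every $i=1,\dots,m$, $N$ is an upper bound for the absolute values of the denominators of the coefficients of $h_i$.
   Context: A fixed monomial order on $\mathbb{Q}[x_1,\dots,x_n]$ is used; a polynomial is monic if its leading coefficient with respect to this order is $1$. Denominators of rational coefficients are taken with the fractions in lowest terms. *)

From mathcomp Require Import all_boot all_order all_algebra.
From mathcomp Require Export mpoly.
Set Implicit Arguments. Unset Strict Implicit. Unset Printing Implicit Defensive.
Import Order.TTheory GRing.Theory Num.Theory.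
Local Open Scope ring_scope.

(* A monomial order on 'X_{1..n}: a total order, compatible with
   multiplication of monomials (addition of exponents), with 1 = 0%MM
   minimal (hence a well-order by Dickson's lemma). *)
Definition monomial_order (n : nat) (le : rel 'X_{1..n}) : Prop :=
  [/\ reflexive le, antisymmetric le, transitive le, total le &
      (forall a b c : 'X_{1..n}, le a b -> le (a + c)%MM (b + c)%MM)]
  /\ (forall m : 'X_{1..n}, le 0%MM m).

Definition monic_wrt (n : nat) (le : rel 'X_{1..n}) (p : {mpoly rat[n]}) : Prop :=
  exists2 m : 'X_{1..n}, m \in msupp p &
    p@_m = 1 /\ (forall m' : 'X_{1..n}, m' \in msupp p -> le m' m).

Definition denom (c : rat) : nat := absz (denq c).

Definition lcm_denoms (n : nat) (p : {mpoly rat[n]}) : nat :=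
  \big[lcmn/1%N]_(m <- msupp p) denom p@_m.

From mathcomp Require Import all_boot all_order all_algebra.
From mathcomp Require Import mpoly.
From mathcomp Require Import ring zify.
Import Order.TTheory GRing.Theory Num.Theory.
Local Open Scope ring_scope.

(* Fix a prime p, let v be the p-adic valuation on Q and, for a polynomial F,
   let c(F) be the least valuation of a coefficient of F.  Gauss's lemma
   c(F G) = c(F) + c(G) holds because, if a and b are the largest monomials
   (for any monomial order) of F and G whose coefficients reach the minimum,
   the coefficient of x^(a+b) in F G is F_a G_b plus terms of strictly larger
   valuation.  A monic polynomial has c <= 0, so every factor h_i satisfies
   c(h_i) >= c(g) >= -v(N).  A coefficient of h_i whose denominator has
   p-adic valuation e > 0 has valuation -e, hence e <= v(N); as p is
   arbitrary, every such denominator divides N. *)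

Lemma ratE_scaled (x : rat) (d : int) : d != 0 ->
  x = (numq x * d)%:~R / (denq x * d)%:~R.
Proof.
by move=> d0; rewrite !rmorphM -mulf_div divff ?intr_eq0 // mulr1 divq_num_den.
Qed.

Section Denominators.

Context {n : nat}.
Implicit Types F : {mpoly rat[n]}.

Lemma denom_gt0 c : (0 < denom c)%N.
Proof. by rewrite absz_gt0 denq_neq0. Qed.

Lemma lcm_denoms_gt0 F : (0 < lcm_denoms F)%N.
Proof.
apply: (big_ind (fun d => 0 < d)%N) => // [d1 d2 d1_gt0 d2_gt0|m _].
  by rewrite lcmn_gt0 d1_gt0.
exact: denom_gt0.
Qed.

Lemma denom_dvd_lcm_denoms {F m} : m \in msupp F -> (denom F@_m %| lcm_denoms F)%N.
Proof. by move=> mF; rewrite /lcm_denoms (big_rem m mF) dvdn_lcml. Qed.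

End Denominators.

Section PAdicValuation.

Variable p : nat.
Hypothesis p_prime : prime p.

Lemma lognMz (u w : int) : u != 0 -> w != 0 ->
  logn p `|u * w| = (logn p `|u| + logn p `|w|)%N.
Proof. by move=> u0 w0; rewrite abszM lognM // absz_gt0. Qed.

Lemma lognDz (u w : int) : u + w != 0 ->
  (minn (logn p `|u|) (logn p `|w|) <= logn p `|(u + w)%R|)%N.
Proof.
set t := minn _ _ => uw0.
have dvd_pt (z : int) : (t <= logn p `|z|)%N -> ((p ^ t)%:Z %| z)%Z.
  have [-> | z0] := eqVneq z 0; first by rewrite dvdz0.
  by move=> le_tz; rewrite /dvdz unfold_in /= pfactor_dvdn // absz_gt0.
have : ((p ^ t)%:Z %| u + w)%Z by rewrite rpredD ?dvd_pt ?geq_minl ?geq_minr.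
by rewrite /dvdz unfold_in /= pfactor_dvdn // absz_gt0.
Qed.

Definition pval (x : rat) : int := (logn p `|numq x|)%:Z - (logn p (denom x))%:Z.

Lemma pval_frac (a b : int) : a != 0 -> b != 0 ->
  pval (a%:~R / b%:~R) = (logn p `|a|)%:Z - (logn p `|b|)%:Z.
Proof.
move=> a0 b0; set x := _ / _.
have x0 : numq x != 0 by rewrite numq_eq0 mulf_neq0 ?invr_eq0 ?intr_eq0.
have cross : numq x * b = a * denq x.
  apply: (@intr_inj rat); rewrite !rmorphM /= numqE /x.
  by field; rewrite intr_eq0.
have := congr1 (fun z => logn p `|z|) cross; rewrite /= !lognMz ?denq_neq0 //.
by rewrite /pval /denom; lia.
Qed.

Lemma pvalM x y : x != 0 -> y != 0 -> pval (x * y) = pval x + pval y.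
Proof.
move=> x0 y0; rewrite -numq_eq0 in x0; rewrite -numq_eq0 in y0.
have dxy0 : denq x * denq y != 0 by rewrite mulf_neq0 ?denq_neq0.
have := @pval_frac _ _ (mulf_neq0 x0 y0) dxy0.
rewrite !rmorphM -mulf_div !divq_num_den => ->.
by rewrite !lognMz ?denq_neq0 // /pval /denom; lia.
Qed.

Lemma pvalN x : pval (- x) = pval x.
Proof. by rewrite /pval /denom numqN denqN abszN. Qed.

Lemma pval1 : pval 1 = 0.
Proof. by rewrite /pval /denom /= logn1. Qed.

Lemma pval_fracD (k : int) (a b d : int) :
  a != 0 -> b != 0 -> d != 0 -> a + b != 0 ->
  k <= pval (a%:~R / d%:~R) -> k <= pval (b%:~R / d%:~R) ->
  k <= pval ((a + b)%:~R / d%:~R).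
Proof.
move=> a0 b0 d0 ab0; rewrite !pval_frac //.
by have := @lognDz _ _ ab0; lia.
Qed.

Lemma pvalD (k : int) x y : x != 0 -> y != 0 -> x + y != 0 ->
  k <= pval x -> k <= pval y -> k <= pval (x + y).
Proof.
move=> x0 y0 xy0; rewrite -numq_eq0 in x0; rewrite -numq_eq0 in y0.
have frac_x := @ratE_scaled x _ (denq_neq0 y).
have frac_y : y = (numq y * denq x)%:~R / (denq x * denq y)%:~R.
  by rewrite [denq x * _]mulrC; apply: ratE_scaled; rewrite denq_neq0.
have sumE : x + y =
    (numq x * denq y + numq y * denq x)%:~R / (denq x * denq y)%:~R.
  by rewrite rmorphD mulrDl -frac_x -frac_y.
move=> kx ky; rewrite frac_x in kx; rewrite frac_y in ky; rewrite sumE.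
apply: pval_fracD kx ky; rewrite ?mulf_neq0 ?denq_neq0 //.
by apply: contra xy0; rewrite sumE => /eqP->; rewrite mul0r.
Qed.

Lemma pval_denom c : (0 < logn p (denom c))%N -> pval c = - (logn p (denom c))%:Z.
Proof.
rewrite logn_gt0 mem_primes => /and3P[_ _ p_den].
rewrite /pval logn_coprime ?sub0r // prime_coprime //; apply/negP => p_num.
have : (p %| gcdn `|numq c| (denom c))%N by rewrite dvdn_gcd p_num p_den.
by rewrite (eqP (coprime_num_den c)) Euclid_dvd1.
Qed.

(* [pval_ge k x] stands for v(x) >= k, with the convention v(0) = +oo. *)
Definition pval_ge (k : int) (x : rat) : bool := (x == 0) || (k <= pval x).

Lemma pval_ge0 k : pval_ge k 0.
Proof. by rewrite /pval_ge eqxx. Qed.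

Lemma pval_geD k x y : pval_ge k x -> pval_ge k y -> pval_ge k (x + y).
Proof.
have [-> _|x0] := eqVneq x 0; first by rewrite add0r.
have [-> + _|y0] := eqVneq y 0; first by rewrite addr0.
rewrite /pval_ge (negbTE x0) (negbTE y0) /= => kx ky.
by have [//|xy0] := eqVneq (x + y) 0; rewrite pvalD.
Qed.

Lemma pval_ge_sum k (I : Type) (r : seq I) (P : pred I) (F : I -> rat) :
  (forall i, P i -> pval_ge k (F i)) -> pval_ge k (\sum_(i <- r | P i) F i).
Proof.
by move=> PF; apply: (big_ind (pval_ge k)); [exact: pval_ge0 | exact: pval_geD |].
Qed.

Lemma pval_geM k1 k2 x y :
  pval_ge k1 x -> pval_ge k2 y -> pval_ge (k1 + k2) (x * y).
Proof.
have [-> _ _|x0] := eqVneq x 0; first by rewrite mul0r pval_ge0.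
have [-> _ _|y0] := eqVneq y 0; first by rewrite mulr0 pval_ge0.
rewrite /pval_ge (negbTE x0) (negbTE y0) mulf_eq0 (negbTE x0) (negbTE y0) /=.
by rewrite pvalM //; apply: lerD.
Qed.

Lemma pval_add_gt x y : x != 0 -> pval_ge (pval x + 1) y ->
  x + y != 0 /\ pval (x + y) = pval x.
Proof.
move=> x0; have [->|y0] := eqVneq y 0; first by rewrite addr0.
rewrite /pval_ge (negbTE y0) lezD1 /= => xy.
have xy0 : x + y != 0.
  apply: contraTneq xy => /(canRL (addKr x)); rewrite addr0 => ->.
  by rewrite pvalN ltxx.
have ge_x : pval x <= pval (x + y) by apply: pvalD; rewrite ?lexx ?(ltW xy).
split=> //; apply/eqP; rewrite eq_le ge_x andbT leNgt; apply/negP => gt_xy.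
have : pval x < pval (x + y + - y).
  by rewrite -lezD1; apply: pvalD; rewrite ?oppr_eq0 ?addrK ?pvalN ?lezD1.
by rewrite addrK ltxx.
Qed.

Context {n : nat}.
Implicit Types F G : {mpoly rat[n]}.

(* The seed of the minimum lies in [msupp F] unless F = 0. *)
Definition pcontent F : int :=
  \big[Num.min/pval F@_(mlead F)]_(m <- msupp F) pval F@_m.

Lemma pcontent_le {F m} : m \in msupp F -> pcontent F <= pval F@_m.
Proof. by move=> mF; apply: ge_bigmin_seq. Qed.

Lemma pcontent_attained {F} : F != 0 ->
  exists2 m, m \in msupp F & pval F@_m = pcontent F.
Proof.
move=> F0; rewrite /pcontent big_seq.
apply: (big_ind (fun v => exists2 m, m \in msupp F & pval F@_m = v)).
- by exists (mlead F); rewrite ?mlead_supp.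
- by move=> v1 v2 v1F v2F; rewrite /Num.min; case: ifP.
- by move=> m mF; exists m.
Qed.

Lemma pval_ge_pcontent F m : pval_ge (pcontent F) F@_m.
Proof.
rewrite /pval_ge; have [/pcontent_le ->|mF] := boolP (m \in msupp F).
  by rewrite orbT.
by rewrite mcoeff_eq0 mF.
Qed.

Lemma pcontentE {F w m0} : (forall m, pval_ge w F@_m) -> m0 \in msupp F ->
  pval F@_m0 = w -> pcontent F = w.
Proof.
move=> F_ge m0F m0w; apply/eqP; rewrite eq_le -{1}m0w pcontent_le //=.
have F0 : F != 0 by apply: contraTneq m0F => ->; rewrite msupp0.
have [m mF <-] := pcontent_attained F0.
by move: (F_ge m); rewrite /pval_ge mcoeff_eq0 mF.
Qed.

Lemma pcontent1 : pcontent 1 = 0.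
Proof.
apply: (@pcontentE _ _ 0%MM); last by rewrite mcoeff1 eqxx pval1.
  move=> m; rewrite mcoeff1.
  by case: (m == 0%MM); rewrite /pval_ge ?pval1 ?eqxx ?orbT.
by rewrite msupp1 mem_seq1.
Qed.

Lemma pval_ge_mcoeffM {a b F G} :
  (forall m, pval_ge a F@_m) -> (forall m, pval_ge b G@_m) ->
  forall m, pval_ge (a + b) (F * G)@_m.
Proof.
move=> Fa Gb m; rewrite mcoeffM.
by apply: pval_ge_sum => k _; apply: pval_geM.
Qed.

Definition pcontent_lead F (a : 'X_{1..n}) : Prop :=
  [/\ a \in msupp F, pval F@_a = pcontent F &
      forall m, m \in msupp F -> pval F@_m = pcontent F -> (m <= a)%O].

Lemma pcontent_lead_exists F : F != 0 -> exists a, pcontent_lead F a.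
Proof.
move=> /pcontent_attained[m0 m0F m0min].
pose minimal m := (m \in msupp F) && (pval F@_m == pcontent F).
set a := \big[Order.max/m0]_(m <- msupp F | pval F@_m == pcontent F) m.
have /andP[aF /eqP amin] : minimal a.
  rewrite /a big_seq_cond; apply: (big_ind minimal).
  - by rewrite /minimal m0F m0min eqxx.
  - by move=> u v Pu Pv; rewrite /Order.max; case: ifP.
  - by move=> m.
by exists a; split=> // m mF mmin; apply: le_bigmax_seq; rewrite ?mmin.
Qed.

Lemma addm_le_eq {y1 y2 a b : 'X_{1..n}} : (y1 <= a)%O -> (y2 <= b)%O ->
  (y1 + y2)%MM = (a + b)%MM -> y1 = a /\ y2 = b.
Proof.
rewrite !le_eqVlt => /predU1P[-> | lt1] /predU1P[-> | lt2] sum_eq //.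
- by move/addmI: sum_eq => ->.
- by move: (ltmc_le_add lt1 (lexx b)); rewrite -sum_eq ltxx.
- by move: (ltm_add lt1 lt2); rewrite sum_eq ltxx.
Qed.

Lemma mcoeffM_supp F G m : (F * G)@_m =
  \sum_(y <- [seq (y1, y2) | y1 <- msupp F, y2 <- msupp G] | (y.1 + y.2 == m)%MM)
    F@_y.1 * G@_y.2.
Proof.
rewrite mpolyME raddf_sum [RHS]big_mkcond /=; apply: eq_bigr => y _.
by rewrite mcoeffZ mcoeffX; case: eqP; rewrite ?mulr1 ?mulr0.
Qed.

Lemma pval_ge_off_lead {F G a b y1 y2} :
  pcontent_lead F a -> pcontent_lead G b ->
  y1 \in msupp F -> y2 \in msupp G ->
  (y1 + y2 = a + b)%MM -> (y1, y2) != (a, b) ->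
  pval_ge (pcontent F + pcontent G + 1) (F@_y1 * G@_y2).
Proof.
move=> [_ _ a_max] [_ _ b_max] y1F y2G sum_eq ne_ab.
have F0 : F@_y1 != 0 by rewrite -mcoeff_msupp.
have G0 : G@_y2 != 0 by rewrite -mcoeff_msupp.
rewrite /pval_ge mulf_eq0 (negbTE F0) (negbTE G0) /= pvalM //.
have := pcontent_le y1F; have := pcontent_le y2G.
have [e1|] := eqVneq (pval F@_y1) (pcontent F); last lia.
have [e2|] := eqVneq (pval G@_y2) (pcontent G); last lia.
have [y1a y2b] := addm_le_eq (a_max _ y1F e1) (b_max _ y2G e2) sum_eq.
by rewrite y1a y2b eqxx in ne_ab.
Qed.

Lemma mcoeffM_lead {F G a b} : pcontent_lead F a -> pcontent_lead G b ->
  (F * G)@_(a + b) != 0 /\ pval (F * G)@_(a + b) = pcontent F + pcontent G.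
Proof.
move=> Fa Gb; have [aF amin _] := Fa; have [bG bmin _] := Gb.
have Fa0 : F@_a != 0 by rewrite -mcoeff_msupp.
have Gb0 : G@_b != 0 by rewrite -mcoeff_msupp.
have supp_uniq : uniq [seq (y1, y2) | y1 <- msupp F, y2 <- msupp G].
  by rewrite allpairs_uniq ?msupp_uniq // => -[? ?] [? ?] _ _ [-> ->].
rewrite mcoeffM_supp big_mkcond (bigD1_seq (a, b)) ?allpairs_f //= eqxx.
rewrite -amin -bmin -pvalM //; apply: pval_add_gt; first exact: mulf_neq0.
rewrite pvalM // amin bmin big_seq_cond; apply: pval_ge_sum => -[y1 y2].
case/andP=> /allpairsP[[z1 z2] [/= z1F z2G [-> ->]]] ne_ab.
case: eqP => [sum_eq|_]; last exact: pval_ge0.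
exact: pval_ge_off_lead Fa Gb z1F z2G sum_eq ne_ab.
Qed.

Lemma pcontentM F G : F != 0 -> G != 0 ->
  pcontent (F * G) = pcontent F + pcontent G.
Proof.
move=> /pcontent_lead_exists[a Fa] /pcontent_lead_exists[b Gb].
have [ab0 ab_val] := mcoeffM_lead Fa Gb.
apply: pcontentE (pval_ge_mcoeffM (pval_ge_pcontent F) (pval_ge_pcontent G)) _ ab_val.
by rewrite mcoeff_msupp.
Qed.

Lemma pcontent_prod (I : Type) (r : seq I) (P : pred I) (Fs : I -> {mpoly rat[n]}) :
  (forall i, P i -> Fs i != 0) ->
  pcontent (\prod_(i <- r | P i) Fs i) = \sum_(i <- r | P i) pcontent (Fs i).
Proof.
move=> Fs0; suff [] : (\prod_(i <- r | P i) Fs i != 0) /\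
  pcontent (\prod_(i <- r | P i) Fs i) = \sum_(i <- r | P i) pcontent (Fs i).
  by [].
apply: (big_ind2 (fun F w => F != 0 /\ pcontent F = w)).
- by rewrite oner_neq0 pcontent1.
- by move=> F1 w1 F2 w2 [F10 <-] [F20 <-]; rewrite mulf_neq0 // pcontentM.
- by move=> i Pi; rewrite Fs0.
Qed.

Lemma monic_wrt_neq0 (le : rel 'X_{1..n}) F : monic_wrt le F -> F != 0.
Proof. by case=> m mF _; apply: contraTneq mF => ->; rewrite msupp0. Qed.

Lemma pcontent_monic_le0 (le : rel 'X_{1..n}) F : monic_wrt le F -> pcontent F <= 0.
Proof. by case=> m mF [Fm1 _]; rewrite -pval1 -Fm1 pcontent_le. Qed.

Lemma pcontent_prod_le_monic {le : rel 'X_{1..n}} {k} {Fs : 'I_k -> {mpoly rat[n]}} i :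
  (forall j, monic_wrt le (Fs j)) ->
  pcontent (\prod_(j < k) Fs j) <= pcontent (Fs i).
Proof.
move=> Fs_monic; rewrite pcontent_prod => [|j _]; last first.
  exact: monic_wrt_neq0 (Fs_monic j).
rewrite (bigD1 i) //= gerDl sumr_le0 // => j _.
exact: pcontent_monic_le0 (Fs_monic j).
Qed.

Lemma pcontent_ge_lcm_denoms F : - (logn p (lcm_denoms F))%:Z <= pcontent F.
Proof.
have [->|/pcontent_attained[m mF <-]] := eqVneq F 0.
  rewrite /pcontent msupp0 big_nil mcoeff0 /pval /denom /=.
  by rewrite logn0 logn1 subrr oppr_le0.
have := dvdn_leq_log p (lcm_denoms_gt0 F) (denom_dvd_lcm_denoms mF).
by rewrite /pval; lia.
Qed.

Lemma logn_denom_le_monic_factor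
    {le : rel 'X_{1..n}} {k} {Fs : 'I_k -> {mpoly rat[n]}} {i m} :
  (forall j, monic_wrt le (Fs j)) -> m \in msupp (Fs i) ->
  (logn p (denom (Fs i)@_m) <= logn p (lcm_denoms (\prod_(j < k) Fs j)))%N.
Proof.
move=> Fs_monic mFi.
have [->//|/pval_denom val_m] := posnP (logn p (denom (Fs i)@_m)).
have := pcontent_le mFi; have := pcontent_prod_le_monic i Fs_monic.
have := pcontent_ge_lcm_denoms (\prod_(j < k) Fs j).
by rewrite val_m; lia.
Qed.

End PAdicValuation.

Theorem theorem6 (n : nat) (le : rel 'X_{1..n}) (g : {mpoly rat[n]})
    (k : nat) (h : 'I_k -> {mpoly rat[n]}) :
  monomial_order le ->
  monic_wrt le g ->
  (forall i, monic_wrt le (h i)) ->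
  g = \prod_(i < k) h i ->
  (0 < lcm_denoms g)%N /\
  forall (i : 'I_k) (m : 'X_{1..n}), m \in msupp (h i) ->
    (denom (h i)@_m <= lcm_denoms g)%N.
Proof.
move=> _ _ h_monic ->; split=> [|i m hi_m]; first exact: lcm_denoms_gt0.
apply: dvdn_leq (lcm_denoms_gt0 _) _.
apply/dvdn_partP => [|p]; first exact: denom_gt0.
rewrite inE /= -logn_gt0 => p_denom.
have p_prime : prime p by move: p_denom; rewrite logn_gt0 mem_primes => /andP[].
rewrite p_part pfactor_dvdn ?lcm_denoms_gt0 //.
exact: (logn_denom_le_monic_factor _ p_prime h_monic hi_m).
Qed.
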